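(* Let $W$ be the affine Weyl group of type $C_n^{(1)}$ and let $w=t_q\overline w\in W$. Then $\mathcal{L}_{\Lambda_0}(\sigma_nw)=\mathcal{L}_{\Lambda_0}(w)$.
   Context: Affine Kac–Moody setting of type $C_n^{(1)}$ ($n\ge2$): $\mathfrak h^*$ contains simple roots $\alpha_0,\dots,\alpha_n$, marks $(a_0,\dots,a_n)=(1,2,\dots,2,1)$, $(a_0^\vee,\dots,a_n^\vee)=(1,\dots,1)$, null root $\delta=\sum a_i\alpha_i$, canonical central element $c=\sum a_i^\vee\alpha_i^\vee$, Coxeter number $h=2n$, affine fundamental weight $\Lambda_0$, and $\rho^\vee\in\mathfrak h$ with $\langle\alpha_i,\rho^\vee\rangle=1$ for all $i$. The finite part $V_0=\mathbb{R}^n$ with standard dot product, $\alpha_i=\frac1{\sqrt2}(\varepsilon_i-\varepsilon_{i+1})$ ($1\le i\le n-1$), $\alpha_n=\sqrt2\varepsilon_n$. For $x\in V_0$, $t_x(v)=v+\langle v,c\rangle x-((v|x)+\frac12|x|^2\langle v,c\rangle)\delta$. $W_0=\langle s_1,\dots,s_n\rangle$, $M=\sqrt2\mathbb{Z}\varepsilon_1\oplus\dots\oplus\sqrt2\mathbb{Z}\varepsilon_n$, $W=T(M)\rtimes W_0$, each $w\in W$ written uniquely $w=t_q\overline w$. $\omega_n=\frac{\sqrt2}{2}(\varepsilon_1+\dots+\varepsilon_n)$, and $\sigma_n=t_{\omega_n}w_{0,n}w_0$, where $w_0$ is the longest element of $W_0$ and $w_{0,n}$ the longest element of $\langle s_1,\dots,s_{n-1}\rangle$.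 $\mathcal{L}_{\Lambda_0}(g)=\langle\Lambda_0-g\Lambda_0,\rho^\vee\rangle$ for $g\in GL(\mathfrak h^* )$. *)

From HB Require Import structures.
From mathcomp Require Import all_boot all_order all_algebra.
From mathcomp Require Import reals.
Set Implicit Arguments. Unset Strict Implicit. Unset Printing Implicit Defensive.
Import Order.TTheory GRing.Theory Num.Theory.
Local Open Scope ring_scope.

Section AffineC.
Variables (R : realType) (n : nat).

Definition V0 := 'rV[R]_n.
Definition dot (u v : V0) : R := \sum_(j < n) u 0 j * v 0 j.
Definition eps (k : nat) : V0 := \row_(j < n) ((j == k :> nat)%:R).
Definition sqrt2 : R := Num.sqrt 2.

(* Finite simple roots alpha_1..alpha_n, indexed 0-based by k = i-1:
   alpha_i = (eps_i - eps_(i+1))/sqrt2 for i<n, alpha_n = sqrt2 eps_n. *)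
Definition alphaf (k : nat) : V0 :=
  if (k.+1 < n)%N then sqrt2^-1 *: (eps k - eps k.+1) else sqrt2 *: eps k.
Definition markf (k : nat) : R := if (k.+1 < n)%N then 2 else 1.

(* h^* = V_0 (+) R delta (+) R Lambda_0 ; an element (x,a,b) is x + a delta + b Lambda_0. *)
Definition hstar := (V0 * R * R)%type.
Definition hfin (v : hstar) : V0 := v.1.1.
Definition hdel (v : hstar) : R := v.1.2.
Definition hlev (v : hstar) : R := v.2.   (* = <v, c> *)
Definition delta : hstar := (0, 1, 0).
Definition Lambda0 : hstar := (0, 0, 1).
Definition hsub (u v : hstar) : hstar :=
  (hfin u - hfin v, hdel u - hdel v, hlev u - hlev v).

(* Affine simple roots alpha_0..alpha_n (index i : 'I_n.+1);
   alpha_0 = delta - sum_(i>=1) a_i alpha_i, since delta = sum_i a_i alpha_i, a_0 = 1. *)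
Definition alpha (i : 'I_n.+1) : hstar :=
  if (i : nat) is k.+1 then (alphaf k, 0, 0)
  else (- \sum_(k < n) markf k *: alphaf k, 1, 0).

(* Elements of h: rho = (r,s,t) pairs with (x,a,b) as (x|r) + a s + b t
   (h is the dual space of h-star). *)
Definition hdual := (V0 * R * R)%type.
Definition hpair (v : hstar) (rho : hdual) : R :=
  dot (hfin v) rho.1.1 + hdel v * rho.1.2 + hlev v * rho.2.

Definition transl (x : V0) (v : hstar) : hstar :=
  (hfin v + hlev v *: x,
   hdel v - (dot (hfin v) x + 2^-1 * dot x x * hlev v),
   hlev v).

Definition sref (k : nat) : 'M[R]_n :=
  1%:M - (2 / dot (alphaf k) (alphaf k)) *: ((alphaf k)^T *m alphaf k).
Inductive inW0 : 'M[R]_n -> Prop :=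
  | inW0_1 : inW0 1%:M
  | inW0_s (k : 'I_n) (A : 'M[R]_n) : inW0 A -> inW0 (sref k *m A).
Definition actW0 (A : 'M[R]_n) (v : hstar) : hstar :=
  (hfin v *m A, hdel v, hlev v).

Definition inM (q : V0) : Prop := forall j : 'I_n, exists z : int, q 0 j = sqrt2 * z%:~R.

(* w_0 (longest element of W_0 = hyperoctahedral group) is -1;
   w_{0,n} (longest element of <s_1..s_(n-1)> = S_n) reverses coordinates. *)
Definition w0 : 'M[R]_n := - 1%:M.
Definition w0n : 'M[R]_n := \matrix_(i < n, j < n) ((i : nat) + j == n.-1)%:R.

Definition omega_n : V0 := (sqrt2 / 2) *: \row_(j < n) 1.

Definition sigma_n (v : hstar) : hstar :=
  transl omega_n (actW0 w0n (actW0 w0 v)).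

Definition LL (rho : hdual) (g : hstar -> hstar) : R :=
  hpair (hsub Lambda0 (g Lambda0)) rho.

End AffineC.

From HB Require Import structures.
From mathcomp Require Import all_boot all_order all_algebra.
From mathcomp Require Import reals zify ring lra.
Import Order.TTheory GRing.Theory Num.Theory.
Local Open Scope ring_scope.

(* L_{Lambda_0}(g) only sees g Lambda_0, and every linear map of V_0 fixes
   Lambda_0, so L_{Lambda_0}(t_x u) = <delta,rho> |x|^2/2 - (x | rho_fin) for
   any u.  Since w_0 and
   w_{0,n} are orthogonal, sigma_n t_q wbar = t_{omega_n - q w_{0,n}} wbar',
   so it remains to see that x |-> omega_n - x w_{0,n} preserves that quadratic
   function.  This follows from <delta,rho> = 2n and
   rho_fin + rho_fin w_{0,n} = 2n omega_n, which the conditions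
   <alpha_i, rho> = 1 force: they make sqrt2 rho_fin = (2n-1, 2n-3, ..., 1). *)

Section AffineWeylC.
Variables (R : realType) (n : nat).
Implicit Types (u v x y : V0 R n) (A B : 'M[R]_n) (h : hstar R n).

Lemma dotC u v : dot u v = dot v u.
Proof. by apply: eq_bigr => j _; rewrite mulrC. Qed.

Lemma dotDl u1 u2 v : dot (u1 + u2) v = dot u1 v + dot u2 v.
Proof. by rewrite /dot -big_split; apply: eq_bigr => j _; rewrite !mxE mulrDl. Qed.

Lemma dotNl u v : dot (- u) v = - dot u v.
Proof. by rewrite /dot -sumrN; apply: eq_bigr => j _; rewrite !mxE mulNr. Qed.

Lemma dotZl a u v : dot (a *: u) v = a * dot u v.
Proof. by rewrite /dot mulr_sumr; apply: eq_bigr => j _; rewrite !mxE mulrA. Qed.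

Lemma dot0l v : dot 0 v = 0.
Proof. by rewrite -(scale0r v) dotZl mul0r. Qed.

Lemma dotBl u1 u2 v : dot (u1 - u2) v = dot u1 v - dot u2 v.
Proof. by rewrite dotDl dotNl. Qed.

Lemma dotBr u v1 v2 : dot u (v1 - v2) = dot u v1 - dot u v2.
Proof. by rewrite dotC dotBl !(dotC _ u). Qed.

Lemma dotDr u v1 v2 : dot u (v1 + v2) = dot u v1 + dot u v2.
Proof. by rewrite dotC dotDl !(dotC _ u). Qed.

Lemma dot_suml (I : finType) (F : I -> V0 R n) v :
  dot (\sum_i F i) v = \sum_i dot (F i) v.
Proof. by rewrite /dot exchange_big; apply: eq_bigr => j _; rewrite summxE mulr_suml. Qed.

Lemma dot_eps (j : 'I_n) v : dot (eps R n j) v = v 0 j.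
Proof.
rewrite /dot (bigD1 j) //= mxE eqxx mul1r big1 ?addr0 // => i /negbTE ij.
by rewrite mxE -[_ == _ :> nat]/(i == j) ij mul0r.
Qed.

Lemma w0n_rev u (j : 'I_n) : (u *m w0n R n) 0 j = u 0 (rev_ord j).
Proof.
rewrite mxE (bigD1 (rev_ord j)) //= mxE big1 ?addr0 => [|i ij].
  by rewrite (_ : (_ == _) = true) ?mulr1 //; apply/eqP; case: j => j /=; lia.
rewrite mxE; case: eqP => [e|]; last by rewrite mulr0.
by case/eqP: ij; apply: val_inj; case: j e => j /= ? ?; lia.
Qed.

Lemma w0nK u : u *m w0n R n *m w0n R n = u.
Proof. by apply/rowP => j; rewrite !w0n_rev rev_ordK. Qed.

Lemma dot_w0n u v : dot (u *m w0n R n) v = dot u (v *m w0n R n).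
Proof.
rewrite /dot (reindex_inj rev_ord_inj); apply: eq_bigr => j _.
by rewrite !w0n_rev rev_ordK.
Qed.

Lemma omega_n_w0n : omega_n R n *m w0n R n = omega_n R n.
Proof. by apply/rowP => j; rewrite w0n_rev !mxE. Qed.

Definition orthomx A := forall u v, dot (u *m A) (v *m A) = dot u v.

Lemma orthomx_w0 : orthomx (w0 R n).
Proof. by move=> u v; rewrite /w0 !mulmxN !mulmx1 dotNl dotC dotNl opprK dotC. Qed.

Lemma orthomx_w0n : orthomx (w0n R n).
Proof. by move=> u v; rewrite dot_w0n w0nK. Qed.

Lemma transl_add x y h : transl x (transl y h) = transl (x + y) h.
Proof.
rewrite /transl /hfin /hdel /hlev /=; congr (_, _, _).
  by rewrite scalerDr addrAC -addrA.
by rewrite !dotDl !dotDr dotZl (dotC y x); field.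
Qed.

Lemma actW0M A B h : actW0 A (actW0 B h) = actW0 (B *m A) h.
Proof. by rewrite /actW0 /hfin /= mulmxA. Qed.

Lemma actW0_transl {A} : orthomx A ->
  forall x h, actW0 A (transl x h) = transl (x *m A) (actW0 A h).
Proof.
move=> oA x h; rewrite /transl /actW0 /hfin /hdel /hlev /=.
by rewrite mulmxDl scalemxAl !oA.
Qed.

Lemma sigma_n_transl_actW0 x A h :
  sigma_n (transl x (actW0 A h)) =
  transl (omega_n R n - x *m w0n R n) (actW0 (A *m w0 R n *m w0n R n) h).
Proof.
rewrite /sigma_n (actW0_transl orthomx_w0) (actW0_transl orthomx_w0n).
rewrite transl_add !actW0M.
by rewrite mulmxA /w0 mulmxN mulmx1 mulNmx.
Qed.

Definition LL_transl (rho : hdual R n) x : R := rho.1.2 * (dot x x / 2) - dot x rho.1.1.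

Lemma LL_transl_actW0 rho x A : LL rho (fun h => transl x (actW0 A h)) = LL_transl rho x.
Proof.
rewrite /LL /LL_transl /hpair /hsub /transl /actW0 /Lambda0 /hfin /hdel /hlev /=.
by rewrite mul0mx scale1r !add0r dotNl dot0l; field.
Qed.

Lemma LL_transl_sigma rho x :
  rho.1.1 + rho.1.1 *m w0n R n = rho.1.2 *: omega_n R n ->
  LL_transl rho (omega_n R n - x *m w0n R n) = LL_transl rho x.
Proof.
case: rho => [[r s] t] /= hr; rewrite /LL_transl /=.
set om := omega_n R n.
have r_w0n : r *m w0n R n = s *: om - r by rewrite -hr addrC addKr.
have om_r : dot om r = s * dot om om / 2.
  have : dot om (r + r *m w0n R n) = s * dot om om by rewrite hr dotC dotZl dotC.
  by rewrite dotDr -dot_w0n omega_n_w0n => <-; field.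
rewrite !dotBl !dotBr orthomx_w0n (dotC om (x *m _)) !dot_w0n omega_n_w0n r_w0n.
by rewrite dotBr (dotC x (_ *: _)) dotZl om_r (dotC om x); field.
Qed.

Lemma sqrt2_sqr : sqrt2 R * sqrt2 R = 2.
Proof. by rewrite /sqrt2 -expr2 sqr_sqrtr // ler0n. Qed.

Lemma sqrt2_neq0 : sqrt2 R != 0.
Proof. by rewrite /sqrt2 sqrtr_eq0 -ltNge ltr0n. Qed.

Lemma sum_markf : (0 < n)%N -> \sum_(k < n) markf R n k = 2 * n%:R - 1.
Proof.
case: n => // m _; rewrite big_ord_recr /= /markf ltnn.
rewrite (eq_bigr (fun _ => 2)) => [|k _]; last by rewrite ltnS ltn_ord.
by rewrite sumr_const card_ord -mulr_natl -natr1; ring.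
Qed.

Section Coweight.
Variable rho : hdual R n.
Hypothesis hrho : forall i : 'I_n.+1, hpair (@alpha R n i) rho = 1.

Lemma dot_alphaf_rho (k : 'I_n) : dot (alphaf R n k) rho.1.1 = 1.
Proof.
have := hrho (Ordinal (ltn_ord k : (k.+1 < n.+1)%N)).
by rewrite /hpair /alpha /= !mul0r !addr0.
Qed.

Lemma rho_fin_coord (i : 'I_n) : rho.1.1 0 i * sqrt2 R = (2 * (n - i.+1) + 1)%:R.
Proof.
suff coord d (j : 'I_n) : (n - j.+1)%N = d ->
    rho.1.1 0 j * sqrt2 R = (2 * d + 1)%:R by exact: coord.
elim: d j => [|d IH] j hj.
  have := dot_alphaf_rho j; rewrite /alphaf ifN; last by lia.
  by rewrite dotZl dot_eps mulrC.
have hk1 : (j.+1 < n)%N by lia.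
have := dot_alphaf_rho j; rewrite /alphaf ifT //.
rewrite -[eps R n j.+1]/(eps R n (Ordinal hk1)) dotZl dotBl !dot_eps => halpha.
have step : rho.1.1 0 j = rho.1.1 0 (Ordinal hk1) + sqrt2 R.
  by rewrite -[sqrt2 R]mulr1 -halpha mulrA divff ?sqrt2_neq0 // mul1r addrC subrK.
rewrite step mulrDl (IH (Ordinal hk1)) /=; last by lia.
by rewrite sqrt2_sqr -natrD; congr _%:R; lia.
Qed.

Lemma rho_fin_add_rev (i : 'I_n) :
  rho.1.1 0 i + rho.1.1 0 (rev_ord i) = sqrt2 R * n%:R.
Proof.
apply: (mulIf sqrt2_neq0); rewrite mulrDl !rho_fin_coord mulrAC sqrt2_sqr.
by rewrite -natrD -natrM; congr _%:R; case: i => i /= ?; lia.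
Qed.

Hypothesis n_gt0 : (0 < n)%N.

Lemma rho_delta : rho.1.2 = 2 * n%:R.
Proof.
have := hrho ord0; rewrite /hpair /alpha /= mul0r addr0 mul1r dotNl dot_suml.
under eq_bigr do rewrite dotZl dot_alphaf_rho mulr1.
by rewrite sum_markf //; lra.
Qed.

Lemma rho_fin_w0n : rho.1.1 + rho.1.1 *m w0n R n = rho.1.2 *: omega_n R n.
Proof.
apply/rowP => j; rewrite mxE w0n_rev rho_fin_add_rev !mxE rho_delta.
by field.
Qed.

End Coweight.

End AffineWeylC.

Theorem theorem4p11 (R : realType) (n : nat) (hn : (2 <= n)%N)
  (rho : hdual R n)
  (hrho : forall i : 'I_n.+1, hpair (@alpha R n i) rho = 1)
  (q : V0 R n) (hq : inM q) (wbar : 'M[R]_n) (hw : inW0 wbar) :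
  let w := fun v : hstar R n => transl q (actW0 wbar v) in
  LL rho (fun v => sigma_n (w v)) = LL rho w.
Proof.
move=> w; have n_gt0 : (0 < n)%N by exact: ltnW.
have -> : LL rho (fun v => sigma_n (w v)) =
    LL rho (fun v => transl (omega_n R n - q *m w0n R n)
                            (actW0 (wbar *m w0 R n *m w0n R n) v)).
  by rewrite /LL /w sigma_n_transl_actW0.
by rewrite /w !LL_transl_actW0 LL_transl_sigma // rho_fin_w0n.
Qed.
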